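(* Let $p\geq 2$ be an integer, $n=2^p-1$, and let $s$ be an integer with $s\geq 3\cdot 2^{p-2}$. Then there exists a perfect code in the graph $\Gamma_n(1^s)$.
   Context: The $n$-cube $Q_n$ is the graph whose vertex set is the set $\mathbb{B}_n$ of binary strings of length $n$, two strings being adjacent if they differ in exactly one position. For an integer $s\ge 1$, $\Gamma_n(1^s)$ is the subgraph of $Q_n$ induced by the binary strings of length $n$ that do not contain $1^s$ (the string of $s$ consecutive 1's) as a substring, where $\bm{f}$ is a substring of $\bm{s}$ if $\bm{s}=\bm{x}\bm{f}\bm{y}$ for some (possibly empty) strings $\bm{x},\bm{y}$. A perfect code in a graph $G$ is a set $C$ of vertices such that every vertex of $G$ lies in the closed neighbourhood $N[c]=\{v: d_G(c,v)\le 1\}$ of exactly one vertex $c\in C$ (equivalently, $C$ is a dominating set of $G$ and any two distinct elements of $C$ are at distance at least $3$ in $G$). *)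

From mathcomp Require Import all_boot.
Set Implicit Arguments. Unset Strict Implicit. Unset Printing Implicit Defensive.

Definition bstring (n : nat) := (n.-tuple bool).

Definition hamming (n : nat) (x y : bstring n) : nat :=
  count id [seq a.1 != a.2 | a <- zip (val x) (val y)].

Definition cube_adj (n : nat) (x y : bstring n) : bool := hamming x y == 1.

Definition substring (f w : seq bool) : bool := infix f w.

Definition gamma_vert (n s : nat) : pred (bstring n) :=
  fun x => ~~ substring (nseq s true) (val x).

Definition gamma_adj (n s : nat) (x y : bstring n) : bool :=
  [&& gamma_vert s x, gamma_vert s y & cube_adj x y].

Definition gamma_closed_nbhd (n s : nat) (c : bstring n) : pred (bstring n) :=
  fun v => gamma_vert s v && ((v == c) || gamma_adj s c v).

Definition perfect_code_gamma (n s : nat) (C : {set bstring n}) : Prop :=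
  (forall c, c \in C -> gamma_vert s c) /\
  (forall v, gamma_vert s v ->
     #|[set c in C | gamma_closed_nbhd s c v]| = 1).

(** The binary words of length n = 2^p - 1 whose syndrome (the xor of the
    positions of their ones) equals a fixed r < 2^p form a coset of the
    Hamming code, hence a perfect code of the cube Q_n.  Take r = 2^(p-2).
    Bit p-2 of the Gray code of m is set exactly when
    2^(p-2) <= m < 3 * 2^(p-2), and the Gray code commutes with xor, so this
    bit of the syndrome of c is the parity of the ones of c in that window of
    2^(p-1) positions.  A run of s >= 3 * 2^(p-2) ones covers the whole
    window, giving even parity, whereas the Gray bit of r is set: the code
    avoids 1^s, and a perfect code of Q_n lying inside Gamma_n(1^s) is a
    perfect code of Gamma_n(1^s). *)
From Stdlib Require Import PeanoNat Lia.
From HB Require Import structures.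
From mathcomp Require Import all_boot zify.
Set Implicit Arguments. Unset Strict Implicit. Unset Printing Implicit Defensive.

HB.instance Definition _ := Monoid.isComLaw.Build nat 0 Nat.lxor
  (fun a b c => esym (Nat.lxor_assoc a b c)) Nat.lxor_comm Nat.lxor_0_l.

Lemma lxorKl a b : Nat.lxor a (Nat.lxor a b) = b.
Proof. by rewrite -Nat.lxor_assoc Nat.lxor_nilpotent Nat.lxor_0_l. Qed.

Lemma natpowE a b : Nat.pow a b = a ^ b.
Proof. by elim: b => // b IH; rewrite expnS /= IH. Qed.

Lemma lxor_ltn_pow2 p a b : a < 2 ^ p -> b < 2 ^ p -> Nat.lxor a b < 2 ^ p.
Proof.
have pos : Nat.pow 2 p <> 0 by rewrite natpowE; have := expn_gt0 2 p; lia.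
rewrite -!natpowE => /ltP lt_a /ltP lt_b; apply/ltP.
apply/(Nat.div_small_iff _ _ pos).
rewrite -Nat.shiftr_div_pow2 Nat.shiftr_lxor !Nat.shiftr_div_pow2.
by rewrite !(proj2 (Nat.div_small_iff _ _ pos)).
Qed.

Lemma testbit_odd m q : Nat.testbit m q = odd (m %/ 2 ^ q).
Proof.
have oddE k : Nat.odd k = odd k.
  by elim/ltn_ind: k => -[|[|k]] // IH; rewrite Nat.odd_succ_succ IH //= negbK.
rewrite Nat.testbit_odd Nat.shiftr_div_pow2 oddE natpowE; congr odd.
symmetry; apply: (Nat.div_unique _ _ _ (m %% 2 ^ q)).
  by apply/ltP; rewrite ltn_mod expn_gt0.
by rewrite {1}(divn_eq m (2 ^ q)) mulnC.
Qed.

(** Bit [q] of the Gray code [m xor (m / 2)] of [m]. *)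
Definition gray_bit q m := Nat.testbit m q.+1 (+) Nat.testbit m q.

Lemma gray_bit_lxor q a b :
  gray_bit q (Nat.lxor a b) = gray_bit q a (+) gray_bit q b.
Proof.
rewrite /gray_bit !Nat.lxor_spec.
by case: (Nat.testbit a q.+1) (Nat.testbit a q) (Nat.testbit b q.+1)
  (Nat.testbit b q) => [] [] [] [].
Qed.

Lemma gray_bit0 q : gray_bit q 0 = false.
Proof. by rewrite /gray_bit !Nat.bits_0. Qed.

Lemma gray_bit_window q m : m < 2 ^ q.+2 ->
  gray_bit q m = (2 ^ q <= m < 3 * 2 ^ q).
Proof.
have pos : 0 < 2 ^ q by rewrite expn_gt0.
rewrite !expnSr -mulnA mulnC -ltn_divLR // => lt_m4.
have -> : 2 ^ q <= m = (0 < m %/ 2 ^ q) by rewrite leq_divRL // mul1n.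
rewrite /gray_bit !testbit_odd expnSr divnMA -ltn_divLR //.
by case: (m %/ 2 ^ q) lt_m4 => [|[|[|[|k]]]].
Qed.

Lemma count_iota_window a b n :
  count (fun i => a <= i < b) (iota 0 n) = minn b n - a.
Proof.
elim: n => [|n IH]; first by rewrite minn0.
by rewrite -addn1 iotaD count_cat IH /= add0n addn0; case: ltnP; lia.
Qed.

Lemma card_ord_window n a b :
  #|[pred i : 'I_n | a <= i < b]| = minn b n - a.
Proof.
by rewrite -count_iota_window -val_enum_ord count_map -size_filter enumT cardE.
Qed.

Lemma infix_nseq_nth (T : eqType) s (b b' : T) (x : seq T) i :
  infix (nseq s b) x -> size x - s <= i < s -> nth b' x i = b.
Proof.
case/infixP => [x1 [x2 ->]]; rewrite !size_cat size_nseq => /andP [lb ub].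
have le_x1 : size x1 <= i by lia.
have lt_run : i - size x1 < s by lia.
by rewrite nth_cat ltnNge le_x1 nth_cat size_nseq lt_run nth_nseq lt_run.
Qed.

Section Cube.
Variable n : nat.
Implicit Types x y v c : bstring n.

Lemma hammingE x y : hamming x y = #|[pred i | tnth x i != tnth y i]|.
Proof.
rewrite /hamming.
have enum_tuple (z : bstring n) : val z = [seq tnth z i | i <- enum 'I_n].
  by rewrite map_tnth_enum.
rewrite !enum_tuple zip_map -map_comp count_map cardE /enum_mem size_filter count_filter.
by apply: eq_count => i /=; rewrite andbT.
Qed.

Definition flip x (j : 'I_n) : bstring n := [tuple tnth x i (+) (i == j) | i < n].

Lemma hamming_flip x j : hamming (flip x j) x = 1.
Proof.
rewrite hammingE; apply: (@eq_card1 _ j) => i; rewrite !inE tnth_mktuple.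
by case: (tnth x i) (i == j) => [] [].
Qed.

Lemma hamming_leq1P x y : hamming x y <= 1 -> x = y \/ exists j, x = flip y j.
Proof.
rewrite hammingE.
case: (pickP [pred i | tnth x i != tnth y i]) => [j /= neq_j | eq_xy _]; last first.
  by left; apply: eq_from_tnth => i; apply/eqP/negbFE/eq_xy.
rewrite (cardD1 j) inE /= neq_j add1n ltnS leqn0 => /eqP/card0_eq eq_but_j.
right; exists j; apply: eq_from_tnth => i; rewrite tnth_mktuple.
have [-> | neq_ij] := eqVneq i j; first by move: neq_j; case: (tnth x j) (tnth y j) => [] [].
by have := eq_but_j i; rewrite !inE neq_ij => /negbFE/eqP ->; rewrite addbF.
Qed.

Lemma cube_nbhdP x y :
  (y == x) || cube_adj x y -> x = y \/ exists j, x = flip y j.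
Proof.
case/orP => [/eqP -> | /eqP dist1]; first by left.
by apply: hamming_leq1P; rewrite dist1.
Qed.

Definition cube_perfect_code (C : {set bstring n}) :=
  forall v, #|[set c in C | (v == c) || cube_adj c v]| = 1.

Lemma perfect_code_gamma_cube s (C : {set bstring n}) :
  (forall c, c \in C -> gamma_vert s c) -> cube_perfect_code C ->
  perfect_code_gamma s C.
Proof.
move=> C_gamma C_perfect; split=> // v v_gamma; rewrite -(C_perfect v).
apply: eq_card => c; rewrite !inE /gamma_closed_nbhd /gamma_adj v_gamma.
by case C_c: (c \in C); rewrite //= C_gamma.
Qed.

Definition syndrome x : nat :=
  \big[Nat.lxor/0]_(i < n) (if tnth x i then i.+1 else 0).

Lemma syndrome_flip x j : syndrome (flip x j) = Nat.lxor (syndrome x) j.+1.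
Proof.
rewrite /syndrome (bigD1 j) //= [in RHS](bigD1 j) //= tnth_mktuple eqxx.
rewrite (eq_bigr (fun i => if tnth x i then i.+1 else 0)); last first.
  by move=> i /negbTE neq_ij; rewrite tnth_mktuple neq_ij addbF.
rewrite [RHS]Nat.lxor_assoc [in RHS](Nat.lxor_comm _ j.+1) -Nat.lxor_assoc.
by case: (tnth x j); rewrite /= ?Nat.lxor_nilpotent ?Nat.lxor_0_l.
Qed.

Lemma syndrome_ltn p x : n < 2 ^ p -> syndrome x < 2 ^ p.
Proof.
move=> lt_n; apply: (big_ind (fun m => m < 2 ^ p)); first by rewrite expn_gt0.
  exact: lxor_ltn_pow2.
by move=> i _; case: (tnth x i); [apply: leq_ltn_trans lt_n | rewrite expn_gt0].
Qed.

Lemma gray_bit_syndrome q x : n < 2 ^ q.+2 ->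
  gray_bit q (syndrome x) =
  odd #|[pred i : 'I_n | tnth x i && (2 ^ q <= i.+1 < 3 * 2 ^ q)]|.
Proof.
move=> lt_n; rewrite /syndrome (big_morph _ (gray_bit_lxor q) (gray_bit0 q)).
rewrite -sum1_card (big_morph _ oddD (erefl false : odd 0 = false)) [RHS]big_mkcond.
apply: eq_bigr => i _; rewrite inE; case: (tnth x i); last by rewrite gray_bit0.
by rewrite gray_bit_window ?(leq_ltn_trans _ lt_n) //; case: (_ && _).
Qed.

End Cube.

Lemma hamming_coset_perfect p r : r < 2 ^ p ->
  cube_perfect_code [set c : bstring (2 ^ p - 1) | syndrome c == r].
Proof.
move=> lt_r v; have lt_n : 2 ^ p - 1 < 2 ^ p by rewrite subn1 prednK ?expn_gt0.
(* The only candidate is v itself (if t = 0) or v flipped at position t. *)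
set t := Nat.lxor (syndrome v) r.
have near_coset c : ((v == c) || cube_adj c v) && (syndrome c == r) ->
    (c = v /\ t = 0) \/ exists2 j, c = flip v j & t = j.+1.
  case/andP => /cube_nbhdP [-> /eqP syn_v | [j ->]].
    by left; rewrite /t -syn_v Nat.lxor_nilpotent.
  by rewrite syndrome_flip => /eqP syn_c; right; exists j; rewrite // /t -syn_c lxorKl.
have [t0 | t_pos] := eqVneq t 0.
  apply: (@eq_card1 _ v) => c; rewrite !inE andbC.
  apply/idP/eqP => [/near_coset [[] // | [j _ tj]] | ->]; first by rewrite tj in t0.
  by rewrite eqxx (Nat.lxor_eq _ _ t0) eqxx.
have lt_t : t.-1 < 2 ^ p - 1.
  by move: (lxor_ltn_pow2 (syndrome_ltn v lt_n) lt_r) t_pos; rewrite -/t; lia.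
apply: (@eq_card1 _ (flip v (Ordinal lt_t))) => c; rewrite !inE andbC.
apply/idP/eqP => [/near_coset [[_ t0] | [j -> tj]] | ->]; first by rewrite t0 in t_pos.
  by congr flip; apply: val_inj; rewrite /= tj.
rewrite syndrome_flip /= prednK ?lt0n // lxorKl eqxx andbT.
by rewrite /cube_adj hamming_flip orbT.
Qed.

Lemma syndrome_pow2_gamma_vert q s (c : bstring (2 ^ q.+2 - 1)) :
  3 * 2 ^ q <= s -> syndrome c = 2 ^ q -> gamma_vert s c.
Proof.
set L := 2 ^ q; have L_pos : 0 < L by rewrite expn_gt0.
have lt_n : 2 ^ q.+2 - 1 < 2 ^ q.+2 by rewrite subn1 prednK ?expn_gt0.
have size_c : size c = 4 * L - 1 by rewrite size_tuple !expnS mulnA.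
move=> le_s syn_c; apply/negP => run.
have window_ones (i : 'I_(2 ^ q.+2 - 1)) : L <= i.+1 < 3 * L -> tnth c i.
  by move=> w_i; rewrite (tnth_nth false) (infix_nseq_nth _ run) // size_c; lia.
have window_card :
    #|[pred i : 'I_(2 ^ q.+2 - 1) | tnth c i && (L <= i.+1 < 3 * L)]| = 2 * L.
  rewrite (eq_card (B := [pred i : 'I_(2 ^ q.+2 - 1) | L.-1 <= i < (3 * L).-1])) => [|i].
    by rewrite card_ord_window; move: size_c; rewrite size_tuple => ->; lia.
  rewrite !inE; apply/andP/idP => [[_ w_i] | w_i]; first lia.
  by split; [apply: window_ones |]; lia.
have := gray_bit_syndrome c lt_n.
by rewrite syn_c window_card gray_bit_window ?ltn_exp2l // leqnn ltn_Pmull // oddM.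
Qed.

Theorem corollary3 (p s : nat) (hp : 2 <= p) (hs : 3 * 2 ^ (p - 2) <= s) :
  exists C : {set bstring (2 ^ p - 1)}, perfect_code_gamma s C.
Proof.
case: p hp hs => [|[|q]] // _; rewrite !subSS subn0 => hs.
exists [set c : bstring (2 ^ q.+2 - 1) | syndrome c == 2 ^ q].
apply: perfect_code_gamma_cube.
  by move=> c; rewrite inE => /eqP; apply: syndrome_pow2_gamma_vert.
by apply: hamming_coset_perfect; rewrite ltn_exp2l.
Qed.
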